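(* For all positive integers $n,m$, \[s\text{-}sat(Q_n,Q_m)<\Big(m^2+\frac{m}{2}\Big)2^n.\]
   Context: $Q_n$ is the hypercube on $\{0,1\}^n$ with edges between vertices differing in exactly one coordinate. A copy of $F$ is a subgraph isomorphic to $F$. A graph $G$ is $(Q_n,F)$-semi-saturated if $G$ is a subgraph of $Q_n$ and adding any edge of $E(Q_n)\setminus E(G)$ increases the number of copies of $F$. $s\text{-}sat(Q_n,F)$ is the minimum number of edges of a $(Q_n,F)$-semi-saturated graph. *)

From HB Require Import structures.
From mathcomp Require Import all_boot all_order all_algebra.
Set Implicit Arguments. Unset Strict Implicit. Unset Printing Implicit Defensive.

Definition vert (n : nat) := {ffun 'I_n -> bool}.

Definition qadj (n : nat) (u v : vert n) : bool :=
  #|[set i : 'I_n | u i != v i]| == 1%N.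

Definition qedges (n : nat) : {set {set vert n}} :=
  [set e : {set vert n} | [exists u : vert n, exists v : vert n,
      (e == [set u; v]) && qadj u v]].

Definition copies (n m : nat) (E : {set {set vert n}}) :
    {set {set vert n} * {set {set vert n}}} :=
  [set WS : {set vert n} * {set {set vert n}} |
     (WS.2 \subset E) &&
     [exists phi : {ffun vert m -> vert n},
        [&& injectiveb phi,
            WS.1 == phi @: [set: vert m] &
            WS.2 == [set (phi @: e) | e : {set vert m} in qedges m]]]].

Arguments copies : clear implicits.

Definition semisat (n m : nat) (E : {set {set vert n}}) : bool :=
  (E \subset qedges n) &&
  [forall e in qedges n :\: E, #|copies n m E| < #|copies n m (e |: E)|].

(* s-sat(Q_n, Q_m): minimum number of edges of a semi-saturated graph.
   (Q_n itself is semi-saturated, so #|qedges n| is a valid initial value.) *)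

Arguments semisat : clear implicits.
Definition ssat (n m : nat) : nat :=
  \big[minn/#|qedges n|]_(E : {set {set vert n}} | semisat n m E) #|E|.

From HB Require Import structures.
From mathcomp Require Import all_boot all_order all_algebra.
From mathcomp Require Import zify ring.
Set Implicit Arguments. Unset Strict Implicit. Unset Printing Implicit Defensive.
Import Order.TTheory.

(* Choose k with m (2^k - 1) <= n < 2 m 2^k and reserve m disjoint blocks of
   coordinates, each indexed by the nonzero vectors of {0,1}^k.  As for a Hamming
   code, the syndrome of x in block r is the XOR of the labels of the coordinates
   of block r where x is 1.  A vertex is a hub if one of its m syndromes vanishes,
   and E is the set of edges of Q_n meeting a hub.

   E is semi-saturated: a missing edge {u, u + e_j} spans, together with the
   coordinate of each other block c labelled by the (nonzero) c-syndrome of u, a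
   copy of Q_m all of whose other vertices have a vanishing syndrome.

   E is small: the vertices with vanishing r-syndrome form a code of size at most
   2^(n-k), and an edge at such a vertex x in a direction outside block r has both
   ends in the code, so it can be charged to the end with a 0 in that direction.
   Hence 2 |E| <= m (n + 2^k - 1) 2^(n-k) < (2 m^2 + m) 2^n. *)

Definition zerov k : vert k := [ffun => false].

Definition flip n (x : vert n) (d : 'I_n) : vert n := [ffun i => x i (+) (i == d)].

Lemma flipK n (d : 'I_n) : involutive (@flip n ^~ d).
Proof. by move=> x; apply/ffunP => i; rewrite !ffunE -addbA addbb addbF. Qed.

Lemma flip_inj n (d : 'I_n) : injective (@flip n ^~ d).
Proof. exact: inv_inj (flipK d). Qed.

Lemma flip_edgeC n (x : vert n) d : [set flip x d; flip (flip x d) d] = [set x; flip x d].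
Proof. by rewrite flipK setUC. Qed.

Lemma card_vert n : #|{: vert n}| = 2 ^ n.
Proof. by rewrite card_ffun card_bool card_ord. Qed.

Lemma qadjP n (u v : vert n) : reflect (exists j, v = flip u j) (qadj u v).
Proof.
apply: (iffP idP) => [/cards1P[j /setP hj]|[j ->]].
  exists j; apply/ffunP => i; have := hj i; rewrite !inE ffunE.
  by case: (i == j); case: (u i); case: (v i).
by apply/cards1P; exists j; apply/setP => i; rewrite !inE ffunE; case: (u i); case: (i == j).
Qed.

Lemma qedgesP n (e : {set vert n}) :
  reflect (exists u j, e = [set u; flip u j]) (e \in qedges n).
Proof.
apply: (iffP idP) => [|[u [j ->]]].
  by rewrite inE => /existsP[u /existsP[v /andP[/eqP -> /qadjP[j ->]]]]; exists u, j.
rewrite inE; apply/existsP; exists u; apply/existsP; exists (flip u j).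
by rewrite eqxx; apply/qadjP; exists j.
Qed.

Lemma flip_edge_qedges n (x : vert n) d : [set x; flip x d] \in qedges n.
Proof. by apply/qedgesP; exists x, d. Qed.

Lemma leq_card_bigcup (I T : finType) (F : I -> {set T}) :
  #|\bigcup_i F i| <= \sum_i #|F i|.
Proof.
elim/big_rec2: _ => [|i s A _ sA]; first by rewrite cards0.
by rewrite (leq_trans (leq_card_setU _ _)) ?leq_add2l.
Qed.

Section Subcube.

Variables (n m : nat) (u : vert n) (dir : 'I_m -> 'I_n).
Hypothesis dir_inj : injective dir.

Definition subcube : {ffun vert m -> vert n} :=
  [ffun y : vert m => [ffun i => u i (+) [exists c, y c && (dir c == i)]]].

Lemma subcube_dir y c : subcube y (dir c) = u (dir c) (+) y c.
Proof.
rewrite !ffunE; congr (_ (+) _).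
by apply/existsP/idP => [[c' /andP[? /eqP /dir_inj <-]]|yc] //; exists c; rewrite yc eqxx.
Qed.

Lemma subcube_off y i : i \notin codom dir -> subcube y i = u i.
Proof.
move=> idir; rewrite !ffunE; case: existsP => [[c /andP[_ /eqP ci]]|]; last by rewrite addbF.
by move: idir; rewrite -ci codom_f.
Qed.

Lemma subcube0 : subcube (zerov m) = u.
Proof. by apply/ffunP => i; rewrite !ffunE; case: existsP => [[c]|]; rewrite ?ffunE ?addbF. Qed.

Lemma subcube_inj : injective subcube.
Proof.
move=> y1 y2 eq12; apply/ffunP => c.
by apply: (@addbI (u (dir c))); rewrite -!subcube_dir eq12.
Qed.

Lemma subcube_flip y c : subcube (flip y c) = flip (subcube y) (dir c).
Proof.
apply/ffunP => i; case: (boolP (i \in codom dir)) => [/codomP[c' ->]|idir].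
  by rewrite subcube_dir [RHS]ffunE subcube_dir ffunE (inj_eq dir_inj) addbA.
rewrite [RHS]ffunE !subcube_off //; case: eqP => [eic|]; last by rewrite addbF.
by move: idir; rewrite eic codom_f.
Qed.

Lemma subcube_edge y c :
  subcube @: [set y; flip y c] = [set subcube y; flip (subcube y) (dir c)].
Proof. by rewrite imsetU1 imset_set1 subcube_flip. Qed.

End Subcube.

Definition copy_edges n m (phi : {ffun vert m -> vert n}) : {set {set vert n}} :=
  [set phi @: e | e : {set vert m} in qedges m].

Lemma copy_in_copies n m (E : {set {set vert n}}) (phi : {ffun vert m -> vert n}) :
  injective phi -> copy_edges phi \subset E ->
  (phi @: [set: vert m], copy_edges phi) \in copies n m E.
Proof.
move=> /injectiveP phi_inj sub_E; rewrite inE sub_E /=.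
by apply/existsP; exists phi; rewrite phi_inj !eqxx.
Qed.

Lemma copiesS n m (E F : {set {set vert n}}) :
  E \subset F -> copies n m E \subset copies n m F.
Proof.
move=> sEF; apply/subsetP => WS; rewrite !inE => /andP[sWE ->].
by rewrite (subset_trans sWE sEF).
Qed.

Lemma semisat_by_copies n m (E : {set {set vert n}}) :
  E \subset qedges n ->
  (forall e, e \in qedges n :\: E -> exists2 phi : {ffun vert m -> vert n},
     injective phi & (e \in copy_edges phi) && (copy_edges phi \subset e |: E)) ->
  semisat n m E.
Proof.
move=> sEQ new_copy; rewrite /semisat sEQ; apply/forallP => e; apply/implyP => eQE.
have [phi phi_inj /andP[e_phi sub_eE]] := new_copy e eQE.
apply/proper_card/properP; split; first exact/copiesS/subsetUr.
exists (phi @: [set: vert m], copy_edges phi); first exact: copy_in_copies.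
rewrite inE negb_and; apply/orP; left; apply/negP => /subsetP sub_E.
by move: eQE; rewrite in_setD sub_E.
Qed.

Definition cell m k := {p : 'I_m * vert k | p.2 != zerov k}.

Lemma card_cell m k : #|{: cell m k}| = m * (2 ^ k - 1).
Proof.
have -> : #|{: cell m k}| = #|setX [set: 'I_m] [set~ zerov k]|.
  by rewrite card_sig; apply: eq_card => p; rewrite !inE.
by rewrite cardsX cardsT cardsC1 card_ord card_vert subn1.
Qed.

Section HubGraph.

Variables (n m k : nat) (io : cell m k -> 'I_n).
Hypothesis io_inj : injective io.

Definition syndrome (r : 'I_m) (x : vert n) : vert k :=
  [ffun b => \big[addb/false]_(t : cell m k | (val t).1 == r) (x (io t) && (val t).2 b)].

Definition code r : {set vert n} := [set x | syndrome r x == zerov k].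

Definition hub x := [exists r, x \in code r].

Definition hub_edges : {set {set vert n}} := [set e in qedges n | [exists x in e, hub x]].

Definition block r : {set 'I_n} := io @: [set t | (val t).1 == r].

Lemma syndrome_eq_on r (x y : vert n) : {in block r, x =1 y} -> syndrome r x = syndrome r y.
Proof.
move=> xy; apply/ffunP => b; rewrite !ffunE; apply: eq_bigr => t tr.
by rewrite xy // imset_f ?inE.
Qed.

Lemma syndrome_flip (t : cell m k) x :
  syndrome (val t).1 (flip x (io t)) = [ffun b => syndrome (val t).1 x b (+) (val t).2 b].
Proof.
apply/ffunP => b; rewrite !ffunE (bigD1 t) //= [in RHS](bigD1 t) //= ffunE eqxx addbT.
rewrite (eq_bigr (fun t' : cell m k => x (io t') && (val t').2 b)); last first.
  by move=> t' /andP[_ t't]; rewrite ffunE (inj_eq io_inj) (negbTE t't) addbF.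
by case: (x _); case: ((val t).2 b); rewrite /= ?addbT ?addbF ?negbK // addbC.
Qed.

Lemma mem_hub_edges x d : hub x || hub (flip x d) -> [set x; flip x d] \in hub_edges.
Proof.
rewrite inE flip_edge_qedges => /orP[hx|hfx]; apply/existsP.
  by exists x; rewrite set21.
by exists (flip x d); rewrite set22.
Qed.

Lemma syndrome_nonhub u c : ~~ hub u -> syndrome c u != zerov k.
Proof. by move=> /existsPn/(_ c); rewrite inE. Qed.

Lemma exists_block_of (j : 'I_n) : 0 < m -> exists r0, forall t, io t = j -> (val t).1 = r0.
Proof.
move=> m_gt0; case: (pickP (fun t => io t == j)) => [t /eqP tj|no_t].
  by exists (val t).1 => t' /esym; rewrite -tj => /io_inj ->.
by exists (Ordinal m_gt0) => t /eqP; rewrite no_t.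
Qed.

Section NonHubEdge.

(* r0 is the block containing j, if any: flipping along j leaves every other
   block syndrome unchanged. *)
Variables (u : vert n) (j : 'I_n) (r0 : 'I_m).
Hypothesis u_nonhub : ~~ hub u.
Hypothesis block_j : forall t, io t = j -> (val t).1 = r0.

Let ucell c : cell m k := Sub (c, syndrome c u) (syndrome_nonhub c u_nonhub).

Let dir c := if c == r0 then j else io (ucell c).

Let phi := subcube u dir.

Let dir_r0 : dir r0 = j.
Proof. by rewrite /dir eqxx. Qed.

Let dir_inj : injective dir.
Proof.
move=> c1 c2; rewrite /dir.
case: eqP => [->|c1r0]; case: eqP => [->|c2r0] //.
- by move=> /esym /block_j /= /c2r0.
- by move=> /block_j /= /c1r0.
by move=> /io_inj /(congr1 (fun t => (val t).1)).
Qed.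

Let dir_block c c' : c != r0 -> dir c' \in block c -> c' = c.
Proof.
move=> cr0 /imsetP[t]; rewrite inE /dir => /eqP tc.
case: eqP => [_ /esym /block_j|_ /io_inj t_c']; last by rewrite -tc -t_c'.
by rewrite tc => c_r0; rewrite c_r0 eqxx in cr0.
Qed.

Lemma subcube_hub (y : vert m) c : c != r0 -> y c -> hub (phi y).
Proof.
move=> cr0 yc; apply/existsP; exists c; rewrite inE.
have dir_c : dir c = io (ucell c) by rewrite /dir (negbTE cr0).
have agree : {in block c, phi y =1 flip u (io (ucell c))}.
  move=> i ic; rewrite [RHS]ffunE -dir_c.
  case: (boolP (i \in codom dir)) => [/codomP[c' i_c']|i_dir].
    move: ic; rewrite i_c' => /(dir_block cr0) ->.
    by rewrite subcube_dir // eqxx yc.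
  rewrite subcube_off //; case: eqP => [i_c|]; last by rewrite addbF.
  by move: i_dir; rewrite i_c codom_f.
rewrite (syndrome_eq_on agree) (syndrome_flip (ucell c)) /=.
by apply/eqP/ffunP => b; rewrite !ffunE addbb.
Qed.

Lemma subcube_near_r0 (y : vert m) : (forall c, c != r0 -> ~~ y c) ->
  phi y = if y r0 then flip u j else u.
Proof.
move=> y_r0.
case yr0: (y r0); [have -> : y = flip (zerov m) r0 | have -> : y = zerov m];
  rewrite ?subcube_flip ?subcube0 ?dir_r0 //.
all: apply/ffunP => c; rewrite !ffunE; case: (eqVneq c r0) => [->|cr0].
all: by rewrite ?yr0 ?(negbTE (y_r0 c _)) ?(negbTE cr0).
Qed.

Lemma copy_edges_nonhub : copy_edges phi \subset [set u; flip u j] |: hub_edges.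
Proof.
apply/subsetP => _ /imsetP[_ /qedgesP[y [c ->]] ->]; rewrite subcube_edge //.
case: (boolP [exists c1, (c1 != r0) && (y c1 || flip y c c1)]).
  case/existsP => c1 /andP[c1r0 /orP[yc1|yc1]]; rewrite setU1r // mem_hub_edges //.
    by rewrite (subcube_hub c1r0 yc1).
  by rewrite -subcube_flip // (subcube_hub c1r0 yc1) orbT.
move=> /existsPn near_r0.
have y_r0 c1 : c1 != r0 -> ~~ y c1 by move/(_ c1): near_r0 => /[swap] -> /norP[].
have c_r0 : c = r0.
  apply: contraTeq (near_r0 c) => cr0; rewrite cr0 ffunE eqxx /=.
  by rewrite (negbTE (y_r0 c cr0)).
rewrite c_r0 dir_r0 subcube_near_r0 //.
by case: (y r0); rewrite ?flip_edgeC setU11.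
Qed.

Lemma nonhub_edge_copy : exists2 phi : {ffun vert m -> vert n}, injective phi &
  ([set u; flip u j] \in copy_edges phi) &&
  (copy_edges phi \subset [set u; flip u j] |: hub_edges).
Proof.
exists phi; first exact: subcube_inj.
rewrite copy_edges_nonhub andbT; apply/imsetP; exists [set zerov m; flip (zerov m) r0].
  exact: flip_edge_qedges.
by rewrite subcube_edge // subcube0 dir_r0.
Qed.

End NonHubEdge.

Lemma hub_edges_semisat : 0 < m -> semisat n m hub_edges.
Proof.
move=> m_gt0; apply: semisat_by_copies => [|e].
  by apply/subsetP => e; rewrite inE => /andP[].
rewrite in_setD inE => /andP[e_nonhub /[dup] eQ /qedgesP[u [j e_uj]]].
have u_nonhub : ~~ hub u.
  by move: e_nonhub; rewrite eQ /= => /existsPn/(_ u); rewrite e_uj set21.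
have [r0 block_j] := exists_block_of j m_gt0.
by rewrite e_uj; exact: nonhub_edge_copy block_j.
Qed.

Lemma card_code r : #|code r| * 2 ^ k <= 2 ^ n.
Proof.
pose F (p : vert n * vert k) :=
  if insub (r, p.2) is Some t then flip p.1 (io t) else p.1.
have syndrome_F x l : x \in code r -> syndrome r (F (x, l)) = l.
  rewrite inE /F /= => /eqP x_r; case: insubP => [t _ t_rl|].
    have := syndrome_flip t x; rewrite t_rl /= x_r => ->.
    by apply/ffunP => b; rewrite !ffunE.
  by rewrite negbK /= => /eqP ->.
have F_inj : {in setX (code r) [set: vert k] &, injective F}.
  move=> [x1 l1] [x2 l2] /setXP[/= x1r _] /setXP[/= x2r _] eqF.
  have l12 : l1 = l2 by rewrite -(syndrome_F x1 l1) // -(syndrome_F x2 l2) // eqF.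
  move: eqF; rewrite /F /= l12; case: insub => [t|] eq12; last by rewrite eq12.
  by rewrite (flip_inj eq12).
rewrite -(card_vert k) -cardsT -cardsX -(card_in_imset F_inj) -(card_vert n).
exact: max_card.
Qed.

Lemma card_block r : #|block r| <= 2 ^ k - 1.
Proof.
rewrite (leq_trans (leq_imset_card _ _)) // -(card_vert k) subn1 -(cardsC1 (zerov k)).
have label_inj : {in [set t : cell m k | (val t).1 == r] &, injective (fun t => (val t).2)}.
  move=> [[r1 l1] ?] [[r2 l2] ?]; rewrite !inE /= => /eqP-> /eqP-> l12.
  by apply: val_inj; rewrite /= l12.
rewrite -(card_in_imset label_inj); apply/subset_leq_card/subsetP => _ /imsetP[t _ ->].
by rewrite !inE; case: t.
Qed.

Lemma code_flip_off r i x : i \notin block r -> (flip x i \in code r) = (x \in code r).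
Proof.
move=> i_r; rewrite !inE (@syndrome_eq_on r (flip x i) x) // => i' i'_r.
rewrite ffunE; case: eqP => [i'i|]; last by rewrite addbF.
by move: i'_r; rewrite i'i (negbTE i_r).
Qed.

Lemma card_code_half r i : i \notin block r ->
  2 * #|code r :\: [set x : vert n | x i]| = #|code r|.
Proof.
move=> i_r; rewrite -(cardsID [set x : vert n | x i] (code r)) mul2n -addnn; congr (_ + _).
rewrite -(card_imset _ (@flip_inj n i)) (can_imset_pre _ (@flipK n i)); apply: eq_card => x.
by rewrite [RHS]inE in_setI code_flip_off // in_setD !inE ffunE eqxx addbT andbC.
Qed.

Definition low_side r i : {set vert n} :=
  if i \in block r then code r else code r :\: [set x : vert n | x i].

Lemma card_low_side r i :
  2 * #|low_side r i| = #|code r| + (if i \in block r then #|code r| else 0).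
Proof.
by rewrite /low_side; case: ifP => [_|/negbT/card_code_half]; rewrite ?addn0 ?mul2n ?addnn.
Qed.

Lemma hub_edges_cover :
  hub_edges \subset \bigcup_r \bigcup_i [set [set x; flip x i] | x in low_side r i].
Proof.
apply/subsetP => e; rewrite inE.
case/andP => /qedgesP[u [j e_uj]] /existsP[x /andP[xe /existsP[r xr]]].
have e_xj : e = [set x; flip x j] by move: xe; rewrite e_uj => /set2P[]->; rewrite ?flip_edgeC.
apply/bigcupP; exists r => //; apply/bigcupP; exists j => //; apply/imsetP; rewrite /low_side.
case: ifPn => [_|j_r]; first by exists x.
case xj: (x j); last by exists x; rewrite // in_setD xr inE xj.
exists (flip x j); last by rewrite flip_edgeC.
by rewrite in_setD code_flip_off // xr !inE ffunE eqxx xj.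
Qed.

Lemma card_low_sides r : 2 * \sum_i #|low_side r i| <= (n + (2 ^ k - 1)) * #|code r|.
Proof.
rewrite big_distrr /= (eq_bigr _ (fun i _ => card_low_side r i)) big_split /=.
rewrite sum_nat_const card_ord -big_mkcond sum_nat_const mulnDl leq_add2l.
by rewrite leq_mul2r card_block orbT.
Qed.

Lemma card_hub_edges : 2 ^ k * (2 * #|hub_edges|) <= m * (n + (2 ^ k - 1)) * 2 ^ n.
Proof.
have card_E : #|hub_edges| <= \sum_r \sum_i #|low_side r i|.
  apply: leq_trans (subset_leq_card hub_edges_cover) _.
  apply: leq_trans (leq_card_bigcup _) _; apply: leq_sum => r _.
  apply: leq_trans (leq_card_bigcup _) _; apply: leq_sum => i _.
  exact: leq_imset_card.
have card2_E : 2 * #|hub_edges| <= \sum_r (n + (2 ^ k - 1)) * #|code r|.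
  rewrite (leq_trans (leq_mul (leqnn 2) card_E)) // big_distrr /=.
  by apply: leq_sum => r _; exact: card_low_sides.
apply: leq_trans (leq_mul (leqnn _) card2_E) _.
rewrite big_distrr /= -[in X in _ <= X](card_ord m) -mulnA -sum_nat_const.
by apply: leq_sum => r _; rewrite mulnCA leq_mul2l (mulnC (2 ^ k)) card_code orbT.
Qed.

End HubGraph.

Lemma hub_graph_bound n m k : 0 < m -> m * (2 ^ k - 1) <= n ->
  exists2 E, semisat n m E & 2 ^ k * (2 * #|E|) <= m * (n + (2 ^ k - 1)) * 2 ^ n.
Proof.
move=> m_gt0; rewrite -card_cell => cell_le_n.
pose io (t : cell m k) : 'I_n := widen_ord cell_le_n (enum_rank t).
have io_inj : injective io by move=> t1 t2 /(congr1 val) /= /val_inj /enum_rank_inj.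
by exists (hub_edges io); [exact: hub_edges_semisat | exact: card_hub_edges].
Qed.

Lemma ssat_le n m E : semisat n m E -> ssat n m <= #|E|.
Proof. by rewrite /ssat -minEnat -leEnat; exact: bigmin_le_cond. Qed.

Lemma exists_block_exponent n m : 0 < m ->
  exists k, m * (2 ^ k - 1) <= n /\ n < 2 * m * 2 ^ k.
Proof.
move=> m_gt0; exists (trunc_log 2 (n %/ m + 1)).
have lo : 2 ^ trunc_log 2 (n %/ m + 1) <= n %/ m + 1 by apply: trunc_logP; rewrite ?addn1.
have hi : n %/ m + 1 < 2 ^ (trunc_log 2 (n %/ m + 1)).+1 by apply: trunc_log_ltn.
have := divn_eq n m; have := ltn_pmod n m_gt0; rewrite expnS in hi; split; nia.
Qed.

Lemma ssat_bound n m : 0 < m -> 2 * ssat n m < (2 * m ^ 2 + m) * 2 ^ n.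
Proof.
move=> m_gt0; have [k [k_lo k_hi]] := exists_block_exponent n m_gt0.
have [E /ssat_le ssat_E card_E] := hub_graph_bound m_gt0 k_lo.
have := expn_gt0 2 k; have := expn_gt0 2 n; nia.
Qed.

Import GRing.Theory Num.Theory.
Local Open Scope ring_scope.

Theorem theorem2 (n m : nat) (hn : (0 < n)%N) (hm : (0 < m)%N) :
  (ssat n m)%:R < ((m ^ 2)%:R + m%:R / 2) * (2 ^ n)%:R :> rat.
Proof.
have -> : ((m ^ 2)%:R + m%:R / 2) * (2 ^ n)%:R = ((2 * m ^ 2 + m) * 2 ^ n)%:R / 2 :> rat.
  by rewrite !natrM natrD natrM; field.
by rewrite ltr_pdivlMr // -natrM ltr_nat mulnC ssat_bound.
Qed.
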